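(* Let $\langle V, Q\rangle$ be a Federated Byzantine Agreement System with quorum slice cardinality map $C$. For each $v\in V$ let $\bar q_v=\bigcup_{q\in Q(v)} q$. Define functions $F_i : V\to\mathbb{N}$ for $i\geq 0$ by $F_0(v)=C(v)$ and, for $i\ge 0$, letting $S_i^{v}$ be the sequence of values $(F_i(v') : v'\in \bar q_v)$ sorted in ascending order (one entry per node of $\bar q_v$) and $S_i^v[C(v)]$ its $C(v)$-th element (1-indexed), $$F_{i+1}(v)=\max\{S_i^v[C(v)],\ F_i(v)\}.$$ Then for every $i\geq 0$, every $v\in V$ and every quorum $U$ with $v\in U$, we have $F_i(v)\leq |U|$.
   Context: An FBAS is a pair $\langle V, Q\rangle$ where $V$ is a finite set of nodes and $Q : V \to 2^{2^V}\setminus\{\varnothing\}$ assigns to each node a nonempty collection of subsets of $V$ (its quorum slices), such that for all $v\in V$ and all $q\in Q(v)$, $v \in q$. A set $U \subseteq V$ is a quorum iff $U\neq\varnothing$ and for every $u\in U$ there exists $q \in Q(u)$ with $q\subseteq U$. The quorum slice cardinality map is $C(v)=\min\{|q| : q\in Q(v)\}$. *)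

From mathcomp Require Import all_boot.
Set Implicit Arguments. Unset Strict Implicit. Unset Printing Implicit Defensive.

Definition is_FBAS (V : finType) (Q : V -> {set {set V}}) : Prop :=
  forall v : V, Q v != set0 /\ (forall q, q \in Q v -> v \in q).

Definition is_quorum (V : finType) (Q : V -> {set {set V}}) (U : {set V}) : Prop :=
  U != set0 /\ forall u, u \in U -> exists2 q, q \in Q u & q \subset U.

(* C(v) = min { |q| : q in Q(v) }; the default #|V| is an upper bound of
   every |q|, so it is irrelevant when Q v is nonempty. *)
Definition slice_card (V : finType) (Q : V -> {set {set V}}) (v : V) : nat :=
  \big[minn/#|V|]_(q in Q v) #|q|.

Definition qbar (V : finType) (Q : V -> {set {set V}}) (v : V) : {set V} :=
  \bigcup_(q in Q v) q.

Definition Sseq (V : finType) (Q : V -> {set {set V}}) (f : V -> nat) (v : V)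
  : seq nat := sort leq [seq f v' | v' <- enum (qbar Q v)].

(* F_i ; S[k] (1-indexed) is nth 0 S k.-1 *)
Fixpoint Fseq (V : finType) (Q : V -> {set {set V}}) (i : nat) : V -> nat :=
  match i with
  | 0 => fun v => slice_card Q v
  | i'.+1 => fun v =>
      maxn (nth 0 (Sseq Q (Fseq Q i') v) (slice_card Q v).-1) (Fseq Q i' v)
  end.

From mathcomp Require Import all_boot.

Set Implicit Arguments.
Unset Strict Implicit.
Unset Printing Implicit Defensive.

(** A slice [q] of [v] inside a quorum [U] contains at least [C(v)] nodes,
    all lying in [qbar v]; so if [F_i] is bounded by [|U|] on [U], at least
    [C(v)] entries of [S_i^v] are [<= |U|], hence so is [S_i^v[C(v)]].
    Induction on [i] then bounds [F_i] on [U], starting from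
    [C(v) <= |q| <= |U|]. *)

Lemma sorted_nth_le_count (T : eqType) (leT : rel T) (x0 b : T) (s : seq T) k :
  transitive leT -> sorted leT s -> k < count (leT^~ b) s ->
  leT (nth x0 s k) b.
Proof.
move=> leT_tr; elim: s k => // x s IH [|k] /= s_sorted.
  case: (boolP (leT x b)) => //= not_xb; rewrite add0n -has_count.
  case/hasP=> y sy yb; have x_le_s := allP (order_path_min leT_tr s_sorted).
  by rewrite (leT_tr _ _ _ (x_le_s y sy) yb) in not_xb.
move=> lt_k; apply: IH (path_sorted s_sorted) _.
by case: (leT x b) lt_k => /=; rewrite ?add1n ?ltnS // => /ltnW.
Qed.

Lemma big_minn_le (I : eqType) (r : seq I) (P : pred I) (F : I -> nat) x0 j :
  j \in r -> P j -> \big[minn/x0]_(i <- r | P i) F i <= F j.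
Proof.
move=> + Pj; elim: r => // y r IH; rewrite inE big_cons.
case/predU1P=> [<- | /IH le_rj]; first by rewrite Pj geq_minl.
by case: ifP => // _; exact: leq_trans (geq_minr _ _) le_rj.
Qed.

Section SliceCardinality.

Variables (V : finType) (Q : V -> {set {set V}}).

Lemma slice_card_le v q : q \in Q v -> slice_card Q v <= #|q|.
Proof. exact: big_minn_le (mem_index_enum q). Qed.

Lemma Sseq_nth_le (f : V -> nat) v q b :
  q \in Q v -> v \in q -> {in q, forall x, f x <= b} ->
  nth 0 (Sseq Q f v) (slice_card Q v).-1 <= b.
Proof.
move=> qQ qv f_le_b; apply: sorted_nth_le_count leq_trans _ _.
  exact: sort_sorted leq_total _.
(* [(C v).-1] truncates to [0] when [C v = 0], so [q] must be nonempty. *)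
have q_gt0 : 0 < #|q| by apply/card_gt0P; exists v.
have card_q : #|q| <= count (preim f (leq^~ b)) (enum (qbar Q v)).
  rewrite -size_filter cardE; apply: uniq_leq_size (enum_uniq _) _ => x.
  rewrite mem_enum mem_filter mem_enum /= => qx; rewrite f_le_b //.
  by apply/bigcupP; exists q.
rewrite count_sort count_map (leq_trans _ card_q) //.
by case: (slice_card Q v) (slice_card_le qQ).
Qed.

End SliceCardinality.

Theorem mainTheorem3 (V : finType) (Q : V -> {set {set V}}) :
  is_FBAS Q ->
  forall (i : nat) (v : V) (U : {set V}),
    is_quorum Q U -> v \in U -> Fseq Q i v <= #|U|.
Proof.
move=> fbas i v U [_ quorumU] vU.
elim: i v vU => [|i IH] v vU; have [q qQ qU] := quorumU v vU.
  exact: leq_trans (slice_card_le qQ) (subset_leq_card qU).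
rewrite /= geq_max IH // andbT; apply: (Sseq_nth_le qQ).
  exact: (fbas v).2 q qQ.
by move=> x /(subsetP qU); exact: IH.
Qed.
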